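(* Let $\mathbb{F}$ be an infinite field and $n\ge2$. Then any two $2$-maximal nilpotent subsemigroups of $M(n,\mathbb{F})$ are isomorphic as semigroups.
   Context: $M(n,\mathbb{F})$ is the semigroup of $n\times n$ matrices over $\mathbb{F}$ under multiplication. A semigroup $S$ with zero is nilpotent of nilpotency degree $k$ if all products of $k$ elements of $S$ equal $0$ and some product of $k-1$ elements is nonzero. A nilpotent subsemigroup of $M(n,\mathbb{F})$ of nilpotency degree $k$ is $k$-maximal if it is not properly contained in another nilpotent subsemigroup of $M(n,\mathbb{F})$ of nilpotency degree $k$. *)

From mathcomp Require Import all_boot all_order all_algebra.
Set Implicit Arguments. Unset Strict Implicit. Unset Printing Implicit Defensive.
Import GRing.Theory.
Local Open Scope ring_scope.

Definition infinite_type (T : eqType) : Prop :=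
  forall s : seq T, exists x : T, x \notin s.

Definition mxprod (F : fieldType) (n : nat) (s : seq 'M[F]_n) : 'M[F]_n :=
  foldr (fun a b => a *m b) 1%:M s.

Definition subsemigroup0 (F : fieldType) (n : nat) (S : 'M[F]_n -> Prop) : Prop :=
  S 0 /\ (forall a b, S a -> S b -> S (a *m b)).

Definition nilpotent_subsemigroup (F : fieldType) (n k : nat)
    (S : 'M[F]_n -> Prop) : Prop :=
  subsemigroup0 S /\
  (forall s : seq 'M[F]_n, size s = k -> (forall a, a \in s -> S a) ->
     mxprod s = 0) /\
  (exists s : seq 'M[F]_n, [/\ size s = k.-1, (forall a, a \in s -> S a) &
     mxprod s != 0]).

Definition k_maximal (F : fieldType) (n k : nat) (S : 'M[F]_n -> Prop) : Prop :=
  nilpotent_subsemigroup k S /\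
  (forall T : 'M[F]_n -> Prop, nilpotent_subsemigroup k T ->
     (forall a, S a -> T a) -> (forall a, T a -> S a)).

Definition semigroup_isomorphic (F : fieldType) (n : nat)
    (S T : 'M[F]_n -> Prop) : Prop :=
  exists f : 'M[F]_n -> 'M[F]_n,
    [/\ (forall a, S a -> T (f a)),
        (forall a b, S a -> S b -> f a = f b -> a = b),
        (forall c, T c -> exists2 a, S a & f a = c) &
        (forall a b, S a -> S b -> f (a *m b) = f a *m f b)].

(* A 2-maximal nilpotent subsemigroup S is a null semigroup (all products
   vanish), and maximality makes it closed under scalars, so c |-> c a embeds F
   into S for any nonzero a in S.  Conversely S sits inside M(n,F), which
   embeds into F because F * F embeds into F for infinite F (Hessenberg's
   theorem, obtained from a maximal bijection A * A -> A given by Zorn's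
   lemma).  By Cantor-Bernstein all such S have the cardinality of F, and a
   bijection between null semigroups that fixes 0 is an isomorphism. *)

From mathcomp Require Import all_boot all_order all_algebra.
From mathcomp Require Import boolp classical_sets functions cardinality.
Set Implicit Arguments. Unset Strict Implicit. Unset Printing Implicit Defensive.
Import GRing.Theory.
Local Open Scope classical_set_scope.
Local Open Scope card_scope.

Lemma choice_on T U (u0 : U) (A : set T) (R : T -> U -> Prop) :
  (forall x, A x -> exists y, R x y) ->
  exists f : T -> U, forall x, A x -> R x (f x).
Proof.
move=> AR; have /choice[f fR] : forall x, exists y, A x -> R x y.
  move=> x; have [/AR[y Rxy]|nAx] := pselect (A x); first by exists y.
  by exists u0.
by exists f.
Qed.

Lemma card_le_fun T U (A : set T) (B : set U) (f : T -> U) :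
  set_fun A B f -> set_inj A f -> A #<= B.
Proof.
move=> fAB finj; have [g] : $|{injfun A >-> B}| by apply/injfunPex; exists f.
exact: inj_card_le.
Qed.

Lemma card_le_funP T U (u0 : U) (A : set T) (B : set U) :
  reflect (exists2 f : T -> U, set_fun A B f & set_inj A f) (A #<= B).
Proof.
elim/Ppointed: U => U in u0 B *; first by case: (no u0).
exact: equivP pcard_leP injfunPex.
Qed.

Lemma card_eq_funP T U (u0 : U) (A : set T) (B : set U) :
  reflect (exists f : T -> U, set_bij A B f) (A #= B).
Proof.
elim/Ppointed: U => U in u0 B *; first by case: (no u0).
exact: card_set_bijP.
Qed.

Lemma chain_common T (C : set (set T)) (X Y : set T) (x y : T) :
  total_on C subset -> C X -> C Y -> X x -> Y y ->
  exists2 Z, C Z & Z x /\ Z y.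
Proof.
move=> Ctot CX CY Xx Yy; have [XY|YX] := Ctot _ _ CX CY.
  by exists Y => //; split => //; apply: XY.
by exists X => //; split => //; apply: YX.
Qed.

Definition partial_bij T U (A : set T) (B : set U) (R : set (T * U)) :=
  [/\ R `<=` A `*` B,
      forall x y y', R (x, y) -> R (x, y') -> y = y' &
      forall x x' y, R (x, y) -> R (x', y) -> x = x'].

Lemma partial_bij_bigcup T U (A : set T) (B : set U) (C : set (set (T * U))) :
  C `<=` partial_bij A B -> total_on C subset ->
  partial_bij A B (\bigcup_(R in C) R).
Proof.
move=> CP Ctot; split.
- by move=> p [R /CP[RAB _ _]]; apply: RAB.
- move=> x y y' [R CR Rxy] [R' CR' Rxy'].
  have [Z /CP[_ Zfun _] [Zxy Zxy']] := chain_common Ctot CR CR' Rxy Rxy'.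
  exact: Zfun Zxy Zxy'.
- move=> x x' y [R CR Rxy] [R' CR' Rx'y].
  have [Z /CP[_ _ Zinj] [Zxy Zx'y]] := chain_common Ctot CR CR' Rxy Rx'y.
  exact: Zinj Zxy Zx'y.
Qed.

Lemma card_le_total T U (A : set T) (B : set U) : A #<= B \/ B #<= A.
Proof.
elim/Ppointed: T => T in A *; first by left; apply: card_le_emptyl.
elim/Ppointed: U => U in B *; first by right; apply: card_le_emptyl.
have [R [[RAB Rfun Rinj] Rmax]] := Zorn_bigcup (@partial_bij_bigcup _ _ A B).
have [AR|] := pselect (forall a, A a -> exists b, R (a, b)).
  left; have [f Rf] := choice_on point AR; apply: (@card_le_fun _ _ _ _ f).
    by move=> a /Rf /RAB[].
  move=> a a' /set_mem Aa /set_mem Aa' faa'.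
  by apply: Rinj (Rf _ Aa) _; rewrite faa'; apply: Rf.
move=> /existsNP[a /not_implyP[Aa /forallNP Rna]].
have [BR|] := pselect (forall b, B b -> exists a, R (a, b)).
  right; have [g Rg] := choice_on point BR; apply: (@card_le_fun _ _ _ _ g).
    by move=> b /Rg /RAB[].
  move=> b b' /set_mem Bb /set_mem Bb' gbb'.
  by apply: Rfun (Rg _ Bb) _; rewrite gbb'; apply: Rg.
move=> /existsNP[b /not_implyP[Bb /forallNP Rnb]]; exfalso.
apply: (Rmax (R `|` [set (a, b)])).
  by split=> [p|/(_ (a, b) (or_intror erefl))/Rna//]; left.
split.
- by move=> p [/RAB//|->].
- move=> x y y' [Rxy|exy] [Rxy'|exy'].
  + exact: Rfun Rxy Rxy'.
  + by case: exy' Rxy => -> _ /Rna.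
  + by case: exy Rxy' => -> _ /Rna.
  + by case: exy => _ ->; case: exy' => _ ->.
- move=> x x' y [Rxy|exy] [Rx'y|ex'y].
  + exact: Rinj Rxy Rx'y.
  + by case: ex'y Rxy => _ -> /Rnb.
  + by case: exy Rx'y => _ -> /Rnb.
  + by case: exy => -> _; case: ex'y => -> _.
Qed.

Lemma card_le_setX T T' U U' (A : set T) (A' : set T') (B : set U) (B' : set U') :
  A #<= A' -> B #<= B' -> A `*` B #<= A' `*` B'.
Proof.
elim/Ppointed: T' => T' in A' *.
  by rewrite [A']empty_eq0 => /card_le0P ->; rewrite set0X.
elim/Ppointed: U' => U' in B' *.
  by rewrite [B']empty_eq0 => _ /card_le0P ->; rewrite setX0.
move=> /(card_le_funP point)[f fA finj] /(card_le_funP point)[g gB ginj].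
apply: (@card_le_fun _ _ _ _ (fun p => (f p.1, g p.2))).
  by move=> [x y] [/= Ax By]; split; [apply: fA|apply: gB].
move=> [x y] [x' y'] /set_mem[/= Ax By] /set_mem[/= Ax' By'] [fx gy].
by congr (_, _); [apply: finj fx|apply: ginj gy]; rewrite inE.
Qed.

Section SquareGraph.
Variable X : Type.
Implicit Types (G : set ((X * X) * X)) (A B : set X).

Definition graph_range G : set X := [set z | exists p, G (p, z)].

(* [G] is the graph of a bijection from [A `*` A] onto [A := graph_range G];
   a nonempty [A] must have two points, so that two copies of [A] fit in
   [A `*` A]. *)
Definition square_graph G :=
  [/\ forall a b z, G ((a, b), z) -> graph_range G a /\ graph_range G b,
      forall a b, graph_range G a -> graph_range G b -> exists z, G ((a, b), z),
      forall p z z', G (p, z) -> G (p, z') -> z = z',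
      forall p p' z, G (p, z) -> G (p', z) -> p = p' &
      graph_range G = set0 \/
        exists a0 a1, [/\ graph_range G a0, graph_range G a1 & a0 <> a1]].

Lemma square_graph_bigcup (C : set (set ((X * X) * X))) :
  C `<=` square_graph -> total_on C subset -> square_graph (\bigcup_(G in C) G).
Proof.
move=> Csq Ctot.
have rangeU z :
    graph_range (\bigcup_(G in C) G) z <-> exists2 G, C G & graph_range G z.
  split=> [[p [G CG Gpz]]|[G CG [p Gpz]]]; first by exists G => //; exists p.
  by exists p, G.
split.
- move=> a b z [G CG Gabz]; have [Grange _ _ _ _] := Csq _ CG.
  by have [Ga Gb] := Grange _ _ _ Gabz; split; apply/rangeU; exists G.
- move=> a b /rangeU[G CG [p Gpa]] /rangeU[G' CG' [p' Gpb]].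
  have [Z CZ [Zpa Zpb]] := chain_common Ctot CG CG' Gpa Gpb.
  have [_ Ztot _ _ _] := Csq _ CZ.
  by have [z Zz] := Ztot a b (ex_intro _ p Zpa) (ex_intro _ p' Zpb); exists z, Z.
- move=> p z z' [G CG Gpz] [G' CG' Gpz'].
  have [Z /Csq[_ _ Zfun _ _] [Zpz Zpz']] := chain_common Ctot CG CG' Gpz Gpz'.
  exact: Zfun Zpz Zpz'.
- move=> p p' z [G CG Gpz] [G' CG' Gp'z].
  have [Z /Csq[_ _ _ Zinj _] [Zpz Zp'z]] := chain_common Ctot CG CG' Gpz Gp'z.
  exact: Zinj Zpz Zp'z.
- have [[G CG [a0 [a1 [Ga0 Ga1 a01]]]]|no2] := pselect (exists2 G, C G &
      exists a0 a1, [/\ graph_range G a0, graph_range G a1 & a0 <> a1]).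
    by right; exists a0, a1; split => //; apply/rangeU; exists G.
  left; apply/seteqP; split => // z /rangeU[G CG Gz].
  have [_ _ _ _ [G0|G2]] := Csq _ CG; first by rewrite G0 in Gz.
  by case: no2; exists G.
Qed.

Section Extension.
Variables (G : set ((X * X) * X)) (B : set X) (h : X * X -> X).
Let A := graph_range G.
Let Q := ((A `|` B) `*` (A `|` B)) `\` (A `*` A).
Hypotheses (sqG : square_graph G) (AB0 : A `&` B = set0) (hQB : set_bij Q B h).
Hypothesis A2 : exists a0 a1, [/\ A a0, A a1 & a0 <> a1].

Definition extended_graph := G `|` [set t | Q t.1 /\ h t.1 = t.2].

Lemma graph_range_extended : graph_range extended_graph = A `|` B.
Proof.
have [hB _ hsurj] := hQB.
apply/seteqP; split => [z [q [Gqz|[Qq /= <-]]]|z [Az|Bz]].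
- by left; exists q.
- by right; apply: hB.
- by have [q Gqz] := Az; exists q; left.
- by have [q Qq hqz] := hsurj _ Bz; exists q; right.
Qed.

Lemma square_graph_extended : square_graph extended_graph.
Proof.
have [Grange Gtot Gfun Ginj _] := sqG.
have [hB hinj _] := hQB.
have GnQ q z : G (q, z) -> ~ Q q.
  by case: q => a b /Grange[Aa Ab] [_]; apply.
have AnB z : A z -> B z -> False.
  by move=> Az Bz; have : (A `&` B) z by []; rewrite AB0.
rewrite /square_graph graph_range_extended; split.
- by move=> a b z [/Grange[Aa Ab]|[[[/= Ua Ub] _] _]]; split => //; left.
- move=> a b Ua Ub; have [[Aa Ab]|nAab] := pselect (A a /\ A b).
    by have [z Gz] := Gtot _ _ Aa Ab; exists z; left.
  by exists (h (a, b)); right; split => //; split.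
- move=> q z z' [Gz|[Qq /= <-]] [Gz'|[Qq' /= <-]] //.
  + exact: Gfun Gz Gz'.
  + by case: (GnQ _ _ Gz).
  + by case: (GnQ _ _ Gz').
- move=> q q' z [Gz|[Qq /= hz]] [Gz'|[Qq' /= hz']].
  + exact: Ginj Gz Gz'.
  + by case: (AnB z); [exists q | rewrite -hz'; apply: hB].
  + by case: (AnB z); [exists q' | rewrite -hz; apply: hB].
  + by apply: hinj; rewrite ?inE // hz hz'.
- right; have [a0 [a1 [Aa0 Aa1 a01]]] := A2.
  by exists a0, a1; split => //; left.
Qed.

End Extension.
End SquareGraph.

Section MaximalSquareGraph.
Variable X : Type.
Hypothesis X_infinite : infinite_set [set: X].
Variable G : set ((X * X) * X).
Hypotheses (sqG : square_graph G)
  (maxG : forall G', G `<` G' -> ~ square_graph G').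
Let A := graph_range G.

(* An empty range is beaten by the square graph of [nat] carried into [X]. *)
Lemma maximal_square_graph_range2 : exists a0 a1, [/\ A a0, A a1 & a0 <> a1].
Proof.
have [_ _ _ _ [A0|//]] := sqG; exfalso.
have [x0 _] := infinite_setN0 X_infinite.
have /(card_le_funP x0)[e _ einj] := (infiniteP _).1 X_infinite.
have /(card_eq_funP 0%N)[p [_ pinj psurj]] := card_nat2.
have e_inj : injective e by move=> i j; apply: einj; rewrite inE.
have p_inj : injective p by move=> q r; apply: pinj; rewrite inE.
pose H : set ((X * X) * X) :=
  [set t | exists i j, t = ((e i, e j), e (p (i, j)))].
have rangeH z : graph_range H z <-> exists n, z = e n.
  split=> [[q [i [j [_ ->]]]]|[n ->]]; first by exists (p (i, j)).
  by have [[i j] _ <-] := psurj n I; exists (e i, e j), i, j.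
have G0 t : ~ G t.
  case: t => q z Gqz; have : A z by exists q.
  by rewrite /A A0.
apply: (maxG (G' := H)).
  split=> [t /G0 //|/(_ ((e 0, e 0), e (p (0, 0))))].
  by move=> HG; apply/G0/HG; exists 0%N, 0%N.
split.
- by move=> a b z [i [j [-> -> _]]]; split; apply/rangeH; [exists i|exists j].
- by move=> a b /rangeH[i ->] /rangeH[j ->]; exists (e (p (i, j))), i, j.
- by move=> q z z' [i [j [-> ->]]] [i' [j' [/e_inj <- /e_inj <- ->]]].
- by move=> q q' z [i [j [-> ->]]] [i' [j' [-> /e_inj/p_inj [<- <-]]]].
- right; exists (e 0), (e 1); split; try by apply/rangeH; eexists.
  by move/e_inj.
Qed.

Lemma card_range_square : A `*` A #<= A.
Proof.
have [a0 [_ [Aa0 _ _]]] := maximal_square_graph_range2.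
have [_ Gtot _ Ginj _] := sqG.
have [g Gg] : exists g : X * X -> X, forall q, (A `*` A) q -> G (q, g q).
  apply: (@choice_on _ _ a0 _ (fun q z => G (q, z))).
  by move=> -[a b] [/= Aa Ab]; apply: Gtot.
apply: (@card_le_fun _ _ _ _ g) => [q /Gg Gq|q r /set_mem /Gg Gq /set_mem /Gg].
  by exists q.
by move=> Gr gqr; apply: Ginj Gq _; rewrite gqr.
Qed.

Lemma card_range_setU B : B #<= A -> A `|` B #<= A.
Proof.
have [a0 [a1 [Aa0 Aa1 a01]]] := maximal_square_graph_range2.
move=> /(card_le_funP a0)[d dB dinj].
apply: card_le_trans card_range_square.
pose f x := if pselect (A x) then (a0, x) else (a1, d x).
apply: (@card_le_fun _ _ _ _ f) => [x Ux|x y /set_mem Ux /set_mem Uy].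
  rewrite /f; case: pselect => Ax //; split => //=.
  by case: Ux => // /dB.
rewrite /f; case: pselect => Ax; case: pselect => Ay; case => //.
- by move=> a10; case: a01; rewrite a10.
- by move/dinj; apply; apply/mem_set; [case: Ux|case: Uy].
Qed.

(* Otherwise [A] has a copy [B] outside itself; then [(A `|` B)^2 `\` A^2] has
   the cardinality of [B], so [G] extends to a larger square graph. *)
Lemma card_complement_range : ~` A #<= A.
Proof.
have A2 := maximal_square_graph_range2.
have [a0 [_ [Aa0 _ _]]] := A2.
have [//|/(card_le_funP a0)[k kAC kinj]] := card_le_total (~` A) A; exfalso.
pose B := k @` A.
have AB0 : A `&` B = set0.
  by apply/seteqP; split=> // z [Az [a Aa kaz]]; apply: (kAC _ Aa); rewrite kaz.
have BA : B #<= A by apply: card_image_le.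
have /card_eqPle[_ AB] := inj_card_eq kinj.
pose Q := ((A `|` B) `*` (A `|` B)) `\` (A `*` A).
have /(card_eq_funP a0)[h hQB] : Q #= B.
  apply: Cantor_Bernstein.
    have QU : Q `<=` (A `|` B) `*` (A `|` B) by move=> q [].
    apply: (card_le_trans (subset_card_le QU)).
    have ABA := card_range_setU BA.
    apply: (card_le_trans (card_le_setX ABA ABA)).
    exact: card_le_trans card_range_square AB.
  apply: (@card_le_fun _ _ _ _ (fun b => (b, b))) => [b Bb|b b' _ _ [] //].
  split=> [|[Ab _]]; first by split; right.
  by have : (A `&` B) b by []; rewrite AB0.
have [_ _ hsurj] := hQB.
have [q Qq hq] : exists2 q, Q q & h q = k a0 by apply: hsurj; exists a0.
apply: (maxG _ (square_graph_extended sqG AB0 hQB A2)).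
split=> [t Gt|extG]; first by left.
apply: (kAC _ Aa0); exists q; apply: extG; by right.
Qed.

End MaximalSquareGraph.

Theorem infinite_square_inj (X : Type) :
  infinite_set [set: X] -> exists f : X * X -> X, injective f.
Proof.
move=> X_infinite; have [x0 _] := infinite_setN0 X_infinite.
have [G [sqG maxG]] := Zorn_bigcup (@square_graph_bigcup X).
have XA : [set: X] #<= graph_range G.
  rewrite -(setUv (graph_range G)).
  have XcA := card_complement_range X_infinite sqG maxG.
  exact: (card_range_setU X_infinite sqG maxG XcA).
have : [set: X * X] #<= [set: X].
  rewrite -setXTT; apply: card_le_trans (card_le_setX XA XA) _.
  exact: card_le_trans (card_range_square X_infinite sqG maxG) (card_leT _).
move=> /(card_le_funP x0)[f _ finj].
by exists f => p q fpq; apply: finj fpq; rewrite inE.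
Qed.

Lemma infinite_type_setT (T : eqType) : infinite_type T -> infinite_set [set: T].
Proof.
move=> Tinf /finite_seqP[s sE]; have [x xs] := Tinf s.
by move: (I : [set: T] x); rewrite sE /= (negbTE xs).
Qed.

Section SeqCode.
Variables (X : Type) (x0 : X) (p : X * X -> X).
Hypothesis p_inj : injective p.

Definition seq_code (s : seq X) : X := foldr (fun x c => p (x, c)) x0 s.

Lemma seq_code_inj s t : size s = size t -> seq_code s = seq_code t -> s = t.
Proof.
by elim: s t => [|x s IHs] [|y t] //= [] st /p_inj[-> /(IHs _ st) ->].
Qed.

Lemma matrix_code_inj m n : exists f : 'M[X]_(m, n) -> X, injective f.
Proof.
pose entries (M : 'M[X]_(m, n)) :=
  [seq M ij.1 ij.2 | ij <- enum {: 'I_m * 'I_n}].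
exists (fun M => seq_code (entries M)) => M N /seq_code_inj.
rewrite !size_map => /(_ erefl) /eq_in_map MN.
by apply/matrixP => i j; have := MN (i, j); rewrite mem_enum; apply.
Qed.

End SeqCode.

Local Open Scope ring_scope.

Section NullSemigroups.
Variables (F : fieldType) (n : nat).
Implicit Types (S T : 'M[F]_n -> Prop) (a b : 'M[F]_n).

Definition null_semigroup S := S 0 /\ forall a b, S a -> S b -> a *m b = 0.

Lemma nilpotent2P S :
  nilpotent_subsemigroup 2 S <-> null_semigroup S /\ exists2 a, S a & a != 0.
Proof.
rewrite /nilpotent_subsemigroup /mxprod; split.
  move=> [[S0 _] [S2 [s [s1 Ss s0]]]].
  case: s s1 Ss s0 => [|a [|]] // _ Sa; rewrite /= mulmx1 => a0.
  split; last by exists a => //; apply: Sa; rewrite mem_head.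
  split=> // a' b Sa' Sb; have /= := S2 [:: a'; b] erefl; rewrite mulmx1; apply.
  by move=> x; rewrite !inE => /orP[] /eqP ->.
move=> [[S0 Snull] [a Sa a0]].
split; first by split=> // a' b Sa' Sb; rewrite Snull.
split; last first.
  by exists [:: a]; split=> //= [x|]; rewrite ?inE ?mulmx1 // => /eqP ->.
move=> [|x [|y [|]]] // _ Sxy /=; rewrite mulmx1.
by apply: Snull; apply: Sxy; rewrite !inE eqxx ?orbT.
Qed.

Lemma maximal2_scale_closed S c a : k_maximal 2 S -> S a -> S (c *: a).
Proof.
move=> [/nilpotent2P[[S0 Snull] S_neq0] Smax] Sa.
pose T x := exists d b, S b /\ x = d *: b.
have ST b : S b -> T b by exists 1, b; rewrite scale1r.
apply: (Smax T) => //; last by exists c, a.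
apply/nilpotent2P; split.
  split=> [|_ _ [d [x [Sx ->]]] [e [y [Sy ->]]]]; first exact: ST.
  by rewrite -scalemxAl -scalemxAr Snull // !scaler0.
by have [b Sb b0] := S_neq0; exists b => //; apply: ST.
Qed.

Lemma card_maximal2 S : infinite_type F -> k_maximal 2 S -> S #= [set: F].
Proof.
move=> Finf maxS; have [/nilpotent2P[_ [a Sa a0]] _] := maxS.
apply: Cantor_Bernstein.
  have [p p_inj] := infinite_square_inj (infinite_type_setT Finf).
  have [f f_inj] := matrix_code_inj 0 p_inj n n.
  apply: card_le_trans (card_leT S) _.
  by apply: (@card_le_fun _ _ _ _ f) => // M N _ _; apply: f_inj.
apply: (@card_le_fun _ _ _ _ (fun c => c *: a)) => [c _|c d _ _ /eqP].
  exact: maximal2_scale_closed.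
by rewrite -subr_eq0 -scalerBl scaler_eq0 (negbTE a0) orbF subr_eq0 => /eqP.
Qed.

Lemma null_semigroup_isomorphic S T (f : 'M[F]_n -> 'M[F]_n) :
  null_semigroup S -> null_semigroup T -> set_bij S T f ->
  semigroup_isomorphic S T.
Proof.
move=> [S0 Snull] [T0 Tnull] [fST finj fsurj].
(* Composing with the transposition of [0] and [f 0] makes [f] fix [0], which
   is all a map between null semigroups needs to be multiplicative. *)
pose z := f 0.
pose swap x := if x == 0 then z else if x == z then 0 else x.
have swapK : involutive swap.
  move=> x; rewrite /swap; have [->|x0] := eqVneq x 0.
    by have [->|z0] := eqVneq z 0; rewrite ?eqxx.
  have [->|xz] := eqVneq x z; first by rewrite eqxx.
  by rewrite (negbTE x0) (negbTE xz).
have swapT x : T x -> T (swap x).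
  by rewrite /swap => Tx; case: ifP => _; [apply: fST|case: ifP].
exists (swap \o f); split.
- by move=> a Sa; apply/swapT/fST.
- move=> a b Sa Sb /= /(congr1 swap); rewrite !swapK => fab.
  by apply: finj fab; rewrite inE.
- move=> c /swapT /fsurj[a Sa fa]; exists a => //=.
  by rewrite fa swapK.
- move=> a b Sa Sb /=; rewrite Snull // Tnull; try by apply/swapT/fST.
  by rewrite /swap -/z; have [->|z0] := eqVneq z 0; rewrite ?eqxx.
Qed.

End NullSemigroups.

Theorem corollary11 (F : fieldType) (n : nat) :
  infinite_type F -> (2 <= n)%N ->
  forall S T : 'M[F]_n -> Prop,
    k_maximal 2 S -> k_maximal 2 T -> semigroup_isomorphic S T.
Proof.
(* [2 <= n] only guarantees that such [S] exist. *)
move=> Finf _ S T maxS maxT.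
have /(card_eq_funP 0)[f fST] : S #= T.
  have SF := card_maximal2 Finf maxS; have TF := card_maximal2 Finf maxT.
  exact: card_eq_trans SF (card_esym TF).
have [[/nilpotent2P[nullS _] _] [/nilpotent2P[nullT _] _]] := (maxS, maxT).
exact: null_semigroup_isomorphic nullS nullT fST.
Qed.
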